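(* Let $G$ be a group with finite presentation $\mathcal P=\langle t,\mathcal A:\mathcal R,\ t^{-1}at=\phi(a)\ (a\in\mathcal A)\rangle$, $A=\langle\mathcal A\rangle\le G$, $X$ the Cayley 2-complex, $M,N\ge0$ integers, and $t^NA\cdot Q(M)=\{t^Nat^{-m}:a\in A,\ 0\le m\le M\}$. Let $K_0$ be the component of $X-\{at^{-m}:a\in A,\ 0\le m\le M\}$ containing the vertex $t$, and let $v$ be a vertex of the component $t^NK_0$ of $X-t^NA\cdot Q(M)$. Then for every integer $n\ge0$, $(vt^nA)\cap t^NA\cdot Q(M)=\emptyset$.
   Context: $\mathcal A$ is finite, $\mathcal R\subset F(\mathcal A)$ finite, $\phi:F(\mathcal A)\to F(\mathcal A)$ a homomorphism. $X$ is the simply connected 2-complex with vertex set $G$, 1-skeleton the Cayley graph of $G$ with respect to $\mathcal A\cup\{t\}$, and 2-cells for the relators; $G$ acts by left multiplication. *)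

From mathcomp Require Import all_boot.
Set Implicit Arguments. Unset Strict Implicit. Unset Printing Implicit Defensive.

Section Pres.
Variable Ax : finType.

(* letters of F(A u {t}): None = t, Some a = a; the boolean is "inverted" *)
Definition letter := (option Ax * bool)%type.
Definition word := seq letter.
Definition aword := seq (Ax * bool)%type.

Definition inv_letter (x : letter) : letter := (x.1, ~~ x.2).
Definition inv_word (w : word) : word := rev (map inv_letter w).
Definition emb (u : aword) : word := map (fun x => (Some x.1, x.2)) u.

Definition t_word : word := [:: (None, false)].
Definition tinv_word : word := [:: (None, true)].
Definition tpow (n : nat) : word := flatten (nseq n t_word).
Definition tinvpow (n : nat) : word := flatten (nseq n tinv_word).

Definition areduced (u : aword) : bool :=
  sorted (fun x y : (Ax * bool)%type => y != (x.1, ~~ x.2)) u.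

Definition hnn_rel (phi : Ax -> aword) (a : Ax) : word :=
  [:: (None, true); (Some a, false); (None, false)] ++ inv_word (emb (phi a)).
Definition relators (R : seq aword) (phi : Ax -> aword) : seq word :=
  map emb R ++ map (hnn_rel phi) (enum Ax).

Inductive geq (rels : seq word) : word -> word -> Prop :=
| geq_refl w : geq rels w w
| geq_sym w1 w2 : geq rels w1 w2 -> geq rels w2 w1
| geq_trans w1 w2 w3 : geq rels w1 w2 -> geq rels w2 w3 -> geq rels w1 w3
| geq_free u v x : geq rels (u ++ x :: inv_letter x :: v) (u ++ v)
| geq_rel u v r : r \in rels -> geq rels (u ++ r ++ v) (u ++ v).

Definition inA (rels : seq word) (g : word) : Prop :=
  exists u : aword, geq rels g (emb u).

Definition inTAQ (rels : seq word) (N M : nat) (g : word) : Prop :=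
  exists (u : aword) (m : nat), m <= M /\ geq rels g (tpow N ++ emb u ++ tinvpow m).

(* Two vertices of the Cayley 2-complex X lie in a common closed cell:
   same vertex, joined by an edge g -- g s^{+-1}, or both on the boundary
   of the 2-cell c.r (vertices c.(prefix of r)). *)
Definition cell_adj (rels : seq word) (g h : word) : Prop :=
  geq rels g h
  \/ (exists x : letter, geq rels h (g ++ [:: x]))
  \/ (exists (c r : word) (k l : nat), r \in rels /\
        geq rels g (c ++ take k r) /\ geq rels h (c ++ take l r)).

(* vertices g, h lie in the same path component of X - S, S a set of
   vertices (the open cells avoiding S stay, so components are generated by
   closed cells whose two given vertices are outside S). *)
Inductive conn (rels : seq word) (S : word -> Prop) : word -> word -> Prop :=
| conn_base g : ~ S g -> conn rels S g g
| conn_step g h k : conn rels S g h -> ~ S k -> cell_adj rels h k ->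
    conn rels S g k.

End Pres.

(* Write A t^-j for the set of vertices a t^-j of X (a in A) and A t^-inf for
   their union over j >= 0.  The relations t^-1 a = phi(a) t^-1 make each
   A t^-j stable under right multiplication by A, and every prefix of a relator
   equals t^-e u with u in A and e <= 1.  Hence every vertex of a closed cell
   meeting A t^-(j+1) lies in A t^-inf.  Since A t^-0 = A is removed, walking
   back along a path of X - A.Q(M) from a vertex of A t^-inf never leaves
   A t^-inf, so the path cannot start at t: the t-exponent sum of t is 1,
   whereas it is -j on A t^-j.  Finally t^N w t^n g = t^N a t^-m with g in A
   puts w in A t^-(n+m). *)
From mathcomp Require Import all_boot all_algebra zify.

Set Implicit Arguments. Unset Strict Implicit. Unset Printing Implicit Defensive.

Import GRing.Theory.

Section Words.
Variable Ax : finType.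
Implicit Types (u v : aword Ax) (p w : word Ax) (l : letter Ax).

Lemma inv_letterK : involutive (@inv_letter Ax).
Proof. by case=> ? []. Qed.

Lemma inv_word_cons l p : inv_word (l :: p) = inv_word p ++ [:: inv_letter l].
Proof. by rewrite /inv_word /= rev_cons cats1. Qed.

Lemma inv_wordK : involutive (@inv_word Ax).
Proof.
move=> p; rewrite /inv_word map_rev revK -map_comp.
by rewrite (eq_map inv_letterK) map_id.
Qed.

Lemma tinvpowS j : tinvpow Ax j.+1 = tinvpow Ax j ++ tinv_word Ax.
Proof. by rewrite /tinvpow; elim: j => //= j ->. Qed.

Definition inv_aword u : aword Ax := rev (map (fun x => (x.1, ~~ x.2)) u).

Lemma emb_inv_aword u : emb (inv_aword u) = inv_word (emb u).
Proof. by rewrite /emb /inv_word map_rev -!map_comp. Qed.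

Lemma emb_cat u v : emb (u ++ v) = emb u ++ emb v.
Proof. exact: map_cat. Qed.

Lemma emb_take i u : emb (take i u) = take i (emb u).
Proof. exact: map_take. Qed.

Definition t_exponent (x : letter Ax) : int :=
  if x.1 is None then (if x.2 then -1 else 1)%R else 0%R.

Definition t_height p : int := \sum_(x <- p) t_exponent x.

Lemma t_height_cat p w : t_height (p ++ w) = (t_height p + t_height w)%R.
Proof. exact: big_cat. Qed.

Lemma t_height_emb u : t_height (emb u) = 0%R.
Proof. by rewrite /t_height big_map big1. Qed.

Lemma t_height_inv_word p : t_height (inv_word p) = (- t_height p)%R.
Proof.
rewrite /t_height big_rev big_map -sumrN.
by apply: eq_bigr => -[[a|] []].
Qed.

Lemma t_height_tinvpow j : t_height (tinvpow Ax j) = (- j%:Z)%R.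
Proof.
elim: j => [|j IH]; first by rewrite /t_height big_nil.
by rewrite tinvpowS t_height_cat IH /t_height big_seq1 /t_exponent /=; lia.
Qed.

End Words.

Section GroupWords.
Context {Ax : finType} {rels : seq (word Ax)}.
Implicit Types (p x y : word Ax) (l : letter Ax).

Local Notation "x =G y" := (geq rels x y) (at level 70).

Lemma geq_catl p x y : x =G y -> p ++ x =G p ++ y.
Proof.
elim=> {x y} [w|? ? _|? ? ? _ H1 _ H2|u v l|u v r Hr].
- exact: geq_refl.
- exact: geq_sym.
- exact: geq_trans H2.
- by have := geq_free rels (p ++ u) v l; rewrite -!catA.
- by have := geq_rel (p ++ u) v Hr; rewrite -!catA.
Qed.

Lemma geq_catr p x y : x =G y -> x ++ p =G y ++ p.
Proof.
elim=> {x y} [w|? ? _|? ? ? _ H1 _ H2|u v l|u v r Hr].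
- exact: geq_refl.
- exact: geq_sym.
- exact: geq_trans H2.
- by have := geq_free rels u (v ++ p) l; rewrite -!catA.
- by have := geq_rel u (v ++ p) Hr; rewrite -!catA.
Qed.

Lemma geq_free_end p l : p ++ [:: l; inv_letter l] =G p.
Proof. by have := geq_free rels p [::] l; rewrite cats0. Qed.

Lemma geq_mulV p : p ++ inv_word p =G [::].
Proof.
elim: p => [|l p IH] /=; first exact: geq_refl.
rewrite inv_word_cons catA; apply: geq_trans (geq_free_end [::] l).
by have := geq_catr [:: inv_letter l] (geq_catl [:: l] IH); rewrite -!catA.
Qed.

Lemma geq_Vmul p : inv_word p ++ p =G [::].
Proof. by have := geq_mulV (inv_word p); rewrite inv_wordK. Qed.

Lemma geq_catlI p x y : p ++ x =G p ++ y -> x =G y.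
Proof.
have Vp z : inv_word p ++ p ++ z =G z.
  by rewrite catA; apply: geq_catr (geq_Vmul p).
move=> H; apply: geq_trans (geq_sym (Vp x)) _; apply: geq_trans (Vp y).
exact: geq_catl.
Qed.

Lemma geq_catrI p x y : x ++ p =G y ++ p -> x =G y.
Proof.
have pV z : z ++ p ++ inv_word p =G z.
  by have := geq_catl z (geq_mulV p); rewrite cats0.
move=> H; apply: geq_trans (geq_sym (pV x)) _; apply: geq_trans (pV y).
by rewrite !catA; apply: geq_catr.
Qed.

Definition inAtinv j p := exists u : aword Ax, p =G emb u ++ tinvpow Ax j.

Definition inAtinf p := exists j, inAtinv j p.

Lemma inAtinv_geq j p q : p =G q -> inAtinv j p -> inAtinv j q.
Proof. by move=> Hpq [u Hu]; exists u; apply: geq_trans (geq_sym Hpq) Hu. Qed.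

Lemma inAtinv_cat_tinv j p : inAtinv j p -> inAtinv j.+1 (p ++ tinv_word Ax).
Proof. by move=> [u Hu]; exists u; rewrite tinvpowS catA; apply: geq_catr. Qed.

Lemma inAtinv_cat_t j p : inAtinv j.+1 p -> inAtinv j (p ++ t_word Ax).
Proof.
move=> [u Hu]; exists u; apply: geq_trans (geq_catr _ Hu) _.
by rewrite tinvpowS -!catA catA; apply: geq_free_end.
Qed.

Lemma inAtinv_cat_tinvI j p : inAtinv j.+1 (p ++ tinv_word Ax) -> inAtinv j p.
Proof.
by move/inAtinv_cat_t; apply: inAtinv_geq; rewrite -catA; apply: geq_free_end.
Qed.

Lemma inAtinv_cat_tI j p : inAtinv j (p ++ t_word Ax) -> inAtinv j.+1 p.
Proof.
by move/inAtinv_cat_tinv; apply: inAtinv_geq; rewrite -catA; apply: geq_free_end.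
Qed.

Lemma inAtinv_cat_tinvpow e j p : inAtinv j p -> inAtinv (e + j) (p ++ tinvpow Ax e).
Proof.
elim: e => [|e IH] Hp; first by rewrite cats0.
by rewrite tinvpowS catA; apply/inAtinv_cat_tinv/IH.
Qed.

Lemma inAtinv_cat_tinvpowI e j p : inAtinv (e + j) (p ++ tinvpow Ax e) -> inAtinv j p.
Proof.
elim: e => [|e IH]; first by rewrite cats0.
by rewrite tinvpowS catA => /inAtinv_cat_tinvI/IH.
Qed.

Lemma inAtinv_cat_tpowI n j p : inAtinv j (p ++ tpow Ax n) -> inAtinv (n + j) p.
Proof.
elim: n j p => [|n IH] j p; first by rewrite cats0.
by rewrite (catA p (t_word Ax)) => /IH/inAtinv_cat_tI; rewrite addSn.
Qed.

End GroupWords.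

Arguments inAtinv {Ax} rels j p.
Arguments inAtinf {Ax} rels p.

Section Relators.
Variables (Ax : finType) (R : seq (aword Ax)) (phi : Ax -> aword Ax).
Implicit Types (u v : aword Ax) (p w : word Ax).

Local Notation rels := (relators R phi).
Local Notation "x =G y" := (geq rels x y) (at level 70).
Local Notation t := (t_word Ax).
Local Notation tinv := (tinv_word Ax).

Lemma t_height_relator r : r \in rels -> t_height r = 0%R.
Proof.
rewrite mem_cat => /orP[] /mapP[a _ ->]; first exact: t_height_emb.
rewrite t_height_cat t_height_inv_word t_height_emb oppr0 addr0.
by rewrite /t_height !big_cons big_nil /t_exponent /=; lia.
Qed.

Lemma geq_t_height p w : p =G w -> t_height p = t_height w.
Proof.
elim=> {p w} // [? ? ? _ -> _ -> //|u v x|u v r /t_height_relator Hr].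
  rewrite !t_height_cat /t_height !big_cons.
  by case: x => -[a|] []; rewrite /t_exponent /=; lia.
by rewrite !t_height_cat Hr add0r.
Qed.

Lemma hnn_rel_in a : hnn_rel phi a \in rels.
Proof. by rewrite mem_cat map_f ?orbT ?mem_enum. Qed.

Lemma tinv_conj_letter a : tinv ++ [:: (Some a, false)] =G emb (phi a) ++ tinv.
Proof.
have insert_t_tinv : tinv ++ [:: (Some a, false)] =G
    [:: (None, true); (Some a, false); (None, false)] ++ tinv.
  exact: geq_sym (geq_free_end [:: (None, true); (Some a, false)] (None, false)).
apply: geq_trans insert_t_tinv (geq_trans _ (geq_rel [::] _ (hnn_rel_in a))).
rewrite /hnn_rel /=; apply: (geq_catl [:: _; _; _]); apply: geq_sym.
by rewrite catA; apply: (geq_catr _ (geq_Vmul _)).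
Qed.

Lemma tinv_conj_letterV a :
  tinv ++ [:: (Some a, true)] =G emb (inv_aword (phi a)) ++ tinv.
Proof.
apply: (@geq_catrI _ _ [:: (Some a, false)]).
apply: geq_trans (geq_free_end tinv (Some a, true)) _.
rewrite -catA; apply: geq_sym; apply: geq_trans (geq_catl _ (tinv_conj_letter a)) _.
rewrite emb_inv_aword catA -[X in _ =G X]cat0s; apply: geq_catr; exact: geq_Vmul.
Qed.

Lemma tinv_conjA u : exists v, tinv ++ emb u =G emb v ++ tinv.
Proof.
elim: u => [|[a b] u [v IH]]; first by exists [::]; apply: geq_refl.
have [v0 H0] : exists v0, tinv ++ [:: (Some a, b)] =G emb v0 ++ tinv.
  case: b; first by exists (inv_aword (phi a)); apply: tinv_conj_letterV.
  by exists (phi a); apply: tinv_conj_letter.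
exists (v0 ++ v); rewrite emb_cat -catA.
apply: geq_trans (geq_catr (emb u) H0) _; rewrite -catA; exact: geq_catl.
Qed.

Lemma tinvpow_conjA j u : exists v, tinvpow Ax j ++ emb u =G emb v ++ tinvpow Ax j.
Proof.
elim: j u => [|j IH] u; first by exists u; rewrite cats0; apply: geq_refl.
have [v Hv] := tinv_conjA u; have [w Hw] := IH v; exists w.
rewrite tinvpowS -catA; apply: geq_trans (geq_catl _ Hv) _.
by rewrite !catA; apply: geq_catr.
Qed.

Lemma inAtinv_catA j p v : inAtinv rels j p -> inAtinv rels j (p ++ emb v).
Proof.
move=> [u Hu]; have [w Hw] := tinvpow_conjA j v.
exists (u ++ w); rewrite emb_cat -catA.
by apply: geq_trans (geq_catr _ Hu) _; rewrite -catA; apply: geq_catl.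
Qed.

Lemma inAtinv_catAI j p v : inAtinv rels j (p ++ emb v) -> inAtinv rels j p.
Proof.
move/(inAtinv_catA (inv_aword v)); apply: inAtinv_geq.
by rewrite emb_inv_aword -catA -[X in _ =G X]cats0; apply/geq_catl/geq_mulV.
Qed.

Lemma conj_letter_t a : [:: (None, true); (Some a, false); (None, false)] =G emb (phi a).
Proof.
apply: geq_trans (geq_catr t (tinv_conj_letter a)) _.
by rewrite -catA; apply: geq_free_end.
Qed.

Lemma relator_prefix r i : r \in rels ->
  exists e u, e <= 1 /\ take i r =G tinvpow Ax e ++ emb u.
Proof.
rewrite mem_cat => /orP[] /mapP[x _ ->].
  by exists 0, (take i x); split=> //; rewrite emb_take; apply: geq_refl.
case: i => [|[|[|i]]].
- by exists 0, [::]; split=> //; apply: geq_refl.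
- by exists 1, [::]; split=> //; apply: geq_refl.
- by exists 1, [:: (x, false)]; split=> //; apply: geq_refl.
exists 0, (phi x ++ take i (inv_aword (phi x))); split=> //.
rewrite emb_cat emb_take emb_inv_aword.
exact: (geq_catr _ (conj_letter_t x)).
Qed.

Lemma inAtinf_cat_letter j p l : inAtinv rels j.+1 p -> inAtinf rels (p ++ [:: l]).
Proof.
case: l => -[a|] b Hp.
- by exists j.+1; apply: (inAtinv_catA [:: (a, b)]).
- case: b; [exists j.+2; exact: inAtinv_cat_tinv | exists j; exact: inAtinv_cat_t].
Qed.

Lemma inAtinf_cell_adj j p q : inAtinv rels j.+1 q -> cell_adj rels p q -> inAtinf rels p.
Proof.
move=> Hq [Hpq | [[l Hl] | [c [r [i [k [Hr [Hp Hq']]]]]]]].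
- by exists j.+1; exact: inAtinv_geq (geq_sym Hpq) Hq.
- have /(inAtinf_cat_letter (inv_letter l)) [i Hi] := inAtinv_geq Hl Hq.
  by exists i; apply: inAtinv_geq Hi; rewrite -catA; apply: geq_free_end.
have [e [u [le_e1 Hk]]] := relator_prefix k Hr.
have [e' [u' [_ Hi]]] := relator_prefix i Hr.
have /inAtinv_catAI Hce : inAtinv rels j.+1 ((c ++ tinvpow Ax e) ++ emb u).
  by rewrite -catA; apply: inAtinv_geq (geq_trans Hq' (geq_catl c Hk)) Hq.
have Hc : inAtinv rels (j.+1 - e) c.
  by apply: (inAtinv_cat_tinvpowI (e := e)); rewrite subnKC // (leq_trans le_e1).
exists (e' + (j.+1 - e)); apply: inAtinv_geq (geq_sym (geq_trans Hp (geq_catl c Hi))) _.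
by rewrite catA; apply: inAtinv_catA; apply: inAtinv_cat_tinvpow.
Qed.

Lemma conn_inAtinf M p q :
  conn rels (inTAQ rels 0 M) p q -> inAtinf rels q -> inAtinf rels p.
Proof.
elim=> {p q} [p _ //|p q q' _ IH notS_q' Hadj [[|j] Hq']].
- by case: notS_q'; case: Hq' => u Hu; exists u, 0.
- exact/IH/(inAtinf_cell_adj Hq' Hadj).
Qed.

Lemma t_notin_Atinf : ~ inAtinf rels t.
Proof.
move=> [j [u /geq_t_height]]; rewrite t_height_cat t_height_emb t_height_tinvpow.
by rewrite /t_height big_seq1 /t_exponent /=; lia.
Qed.

End Relators.

Theorem lemma5p8 (Ax : finType) (R : seq (aword Ax)) (phi : Ax -> aword Ax)
  (HR : all (@areduced Ax) R) (Hphi : forall a, areduced (phi a))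
  (M N : nat) (w : word Ax) :
  (* w is a vertex of K_0: the component of X - A.Q(M) containing t;
     then v := t^N w is a vertex of the component t^N K_0 *)
  conn (relators R phi) (inTAQ (relators R phi) 0 M) (t_word Ax) w ->
  forall (n : nat) (g : word Ax), inA (relators R phi) g ->
    ~ inTAQ (relators R phi) N M (tpow Ax N ++ w ++ tpow Ax n ++ g).
Proof.
move=> Hconn n g [v Hg] [u [m [_ Hvertex]]].
have Hwg : inAtinv (relators R phi) m ((w ++ tpow Ax n) ++ emb v).
  exists u; apply: geq_trans _ (geq_catlI Hvertex).
  by rewrite -catA; apply: geq_catl; apply: geq_catl; apply: geq_sym.
apply: (t_notin_Atinf (conn_inAtinf Hconn _)).
by exists (n + m); apply: inAtinv_cat_tpowI (inAtinv_catAI Hwg).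
Qed.
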